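(* Let $k\in\{-1,0,1\}$, $\beta>0$, let $\delta_k>0$ be the positive real solution of $\delta^3+k\delta-\frac{3\beta}{2}=0$, and let $R_b>0$ (with $R_b<1$ if $k=1$). Define \[ R_{\mathrm{AH}}=\frac{1}{\sqrt{\delta_k^2+k}},\quad C_k=\frac{1}{\sqrt{1-kR_b^2}+\delta_kR_b},\quad x_\Sigma=\frac{R_b\delta_k}{C_k},\quad \lambda_1=\frac{\beta R_b^3}{C_k},\quad \lambda_2=\frac{\beta C_k^2}{2\delta_k^3}, \] and, for $u>0$ and $r\ge x_\Sigma u$, $B(u,r)=1-\lambda_1\frac{u}{r}-\lambda_2\frac{r^2}{u^2}$; the apparent horizons of the exterior metric $g_{\mathrm{ext}}=-B(u,r)\,du^2-2\,du\,dr+r^2d\Omega^2$ on $r>x_\Sigma u$ are the hypersurfaces where $B=0$. Then: (1) If $R_b>R_{\mathrm{AH}}$, then $B(u,r)<0$ for all $u>0$, $r>x_\Sigma u$; in particular there is no apparent horizon in the exterior region. (2) If $R_b=R_{\mathrm{AH}}$, then $B(u,x_\Sigma u)=0$ for all $u>0$ (the exterior apparent horizon coincides with the matching surface $r=x_\Sigma u$), and $B(u,r)<0$ for all $r>x_\Sigma u$. (3) If $R_b<R_{\mathrm{AH}}$, then there exists $x_{\mathrm{AH}}>x_\Sigma$ such that the exterior metric has an apparent horizon at $r=x_{\mathrm{AH}}u$; moreover $B(u,r)>0$ for $x_\Sigma u<r<x_{\mathrm{AH}}u$ and $B(u,r)<0$ for $r>x_{\mathrm{AH}}u$.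
   Context: This is the exterior of the self-similar stellar model: the interior is $-dt^2+a(t)^2\big(\frac{dR^2}{1-kR^2}+R^2d\Omega^2\big)$ with $a(t)=\delta_k t$, the matching surface is $R=R_b$ in the interior and $r=x_\Sigma u$ in the exterior (with $u=C_kt$), and $R_{\mathrm{AH}}$ is the comoving radius of the interior apparent horizon. $d\Omega^2=d\theta^2+\sin^2\theta\,d\psi^2$. *)

From Stdlib Require Import Reals.
Open Scope R_scope.

Definition R_AH (k delta : R) : R := 1 / sqrt (delta ^ 2 + k).
Definition C_k (k delta Rb : R) : R := 1 / (sqrt (1 - k * Rb ^ 2) + delta * Rb).
Definition x_Sigma (k delta Rb : R) : R := Rb * delta / C_k k delta Rb.
Definition lambda1 (k beta delta Rb : R) : R := beta * Rb ^ 3 / C_k k delta Rb.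
Definition lambda2 (k beta delta Rb : R) : R :=
  beta * (C_k k delta Rb) ^ 2 / (2 * delta ^ 3).
Definition Bfun (k beta delta Rb u r : R) : R :=
  1 - lambda1 k beta delta Rb * (u / r) - lambda2 k beta delta Rb * (r ^ 2 / u ^ 2).

(** The coefficient [B] is constant along rays [r = x u]: [B(u, x u) = b(x)] with
    [b(x) = 1 - lambda1/x - lambda2 x^2].  The matching condition gives
    [lambda1 = 2 lambda2 x_Sigma^3], which makes [b] strictly decreasing on [[x_Sigma, oo)],
    and the cubic for [delta] gives [b(x_Sigma) = 1 - R_b^2/R_AH^2].  So [b] has no zero
    beyond [x_Sigma] when [R_b >= R_AH] (the zero being [x_Sigma] itself when equality
    holds), and exactly one when [R_b < R_AH], because [b(x) -> -oo]. *)

From Stdlib Require Import Reals Lra Psatz.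
Open Scope R_scope.

Definition horizon_profile (l1 l2 x : R) : R := 1 - l1 / x - l2 * x ^ 2.

Lemma horizon_profile_decreasing (l1 l2 x0 x y : R) :
  0 < l2 -> 0 < x0 -> l1 <= 2 * l2 * x0 ^ 3 -> x0 <= x -> x < y ->
  horizon_profile l1 l2 y < horizon_profile l1 l2 x.
Proof.
  intros Hl2 Hx0 Hl1 Hx Hxy.
  assert (Ediff : horizon_profile l1 l2 x - horizon_profile l1 l2 y
                  = (y - x) * (l2 * (x * y * (x + y)) - l1) / (x * y)).
  { unfold horizon_profile; field; lra. }
  assert (Hsq : x * y > x0 * x0) by nra.
  assert (Hcube : x * y * (x + y) > 2 * x0 ^ 3) by nra.
  assert (0 < (y - x) * (l2 * (x * y * (x + y)) - l1) / (x * y)).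
  { apply Rdiv_lt_0_compat; [apply Rmult_lt_0_compat |]; nra. }
  lra.
Qed.

Lemma horizon_profile_root_above (l1 l2 x0 : R) :
  0 <= l1 -> 0 < l2 -> 0 < x0 -> 0 < horizon_profile l1 l2 x0 ->
  exists z, x0 < z /\ horizon_profile l1 l2 z = 0.
Proof.
  intros Hl1 Hl2 Hx0 Hpos.
  set (cubic := fun x => l2 * x ^ 3 + l1 - x).
  assert (Ecubic : forall x, 0 < x -> cubic x = - x * horizon_profile l1 l2 x).
  { intros x Hx; unfold cubic, horizon_profile; field; lra. }
  set (x1 := x0 + 1 + / l2).
  assert (Hinv : 0 < / l2) by (apply Rinv_0_lt_compat; lra).
  assert (Hx1 : x0 + 1 < x1) by (unfold x1; lra).
  assert (Hneg : horizon_profile l1 l2 x1 < 0).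
  { assert (Hl2x1 : l2 * x1 > 1).
    { unfold x1; replace (l2 * (x0 + 1 + / l2)) with (l2 * (x0 + 1) + 1) by (field; lra).
      nra. }
    assert (0 <= l1 / x1).
    { unfold Rdiv; apply Rmult_le_pos; [lra |].
      left; apply Rinv_0_lt_compat; lra. }
    unfold horizon_profile; nra. }
  destruct (IVT cubic x0 x1) as [z [[Hz0 Hz1] Hz]].
  - unfold cubic; reg.
  - lra.
  - rewrite Ecubic by lra; nra.
  - rewrite Ecubic by lra; nra.
  - rewrite Ecubic in Hz by lra.
    assert (Hprof : horizon_profile l1 l2 z = 0).
    { apply Rmult_integral in Hz; destruct Hz; lra. }
    exists z; split; [| exact Hprof].
    destruct Hz0 as [|<-]; [assumption | lra].
Qed.

Lemma Bfun_horizon_profile (k beta delta Rb u r : R) : 0 < u -> 0 < r ->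
  Bfun k beta delta Rb u r
  = horizon_profile (lambda1 k beta delta Rb) (lambda2 k beta delta Rb) (r / u).
Proof. intros; unfold Bfun, horizon_profile; field; lra. Qed.

Lemma lt_div_of_mul_lt (a u r : R) : 0 < u -> a * u < r -> a < r / u.
Proof.
  intros Hu Har; apply Rmult_lt_reg_r with u; [exact Hu |].
  unfold Rdiv; rewrite Rmult_assoc, Rinv_l; lra.
Qed.

Lemma div_lt_of_lt_mul (a u r : R) : 0 < u -> r < a * u -> r / u < a.
Proof.
  intros Hu Hra; apply Rmult_lt_reg_r with u; [exact Hu |].
  unfold Rdiv; rewrite Rmult_assoc, Rinv_l; lra.
Qed.

Section Exterior.

Variables k beta delta Rb : R.
Hypothesis hbeta : 0 < beta.
Hypothesis hdelta : 0 < delta.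
Hypothesis hcubic : delta ^ 3 + k * delta - 3 * beta / 2 = 0.
Hypothesis hRb : 0 < Rb.

Let den := sqrt (1 - k * Rb ^ 2) + delta * Rb.
Let xs := x_Sigma k delta Rb.
Let L1 := lambda1 k beta delta Rb.
Let L2 := lambda2 k beta delta Rb.
Let b := horizon_profile L1 L2.

(* [sqrt] is [0] on negative arguments, so [den > 0] needs no hypothesis on [k] or [Rb]. *)
Lemma den_pos : 0 < den.
Proof. assert (0 <= sqrt (1 - k * Rb ^ 2)) by apply sqrt_pos; unfold den; nra. Qed.

Lemma x_Sigma_eq : xs = Rb * delta * den.
Proof. pose proof den_pos; unfold xs, x_Sigma, C_k; fold den; field; lra. Qed.

Lemma lambda1_eq : L1 = beta * Rb ^ 3 * den.
Proof. pose proof den_pos; unfold L1, lambda1, C_k; fold den; field; lra. Qed.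

Lemma lambda2_eq : L2 = beta / (2 * delta ^ 3 * den ^ 2).
Proof. pose proof den_pos; unfold L2, lambda2, C_k; fold den; field; lra. Qed.

Lemma x_Sigma_pos : 0 < xs.
Proof. rewrite x_Sigma_eq; pose proof den_pos; apply Rmult_lt_0_compat; nra. Qed.

Lemma lambda2_pos : 0 < L2.
Proof.
  rewrite lambda2_eq; pose proof den_pos.
  assert (0 < delta ^ 3) by (apply pow_lt; lra).
  apply Rdiv_lt_0_compat; [lra |]; apply Rmult_lt_0_compat; nra.
Qed.

Lemma lambda1_matching : L1 = 2 * L2 * xs ^ 3.
Proof.
  pose proof den_pos.
  rewrite lambda1_eq, lambda2_eq, x_Sigma_eq; field; lra.
Qed.

Lemma lambda1_nonneg : 0 <= L1.
Proof.
  rewrite lambda1_matching; pose proof lambda2_pos; pose proof x_Sigma_pos.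
  assert (0 < xs ^ 3) by (apply pow_lt; lra); nra.
Qed.

(* The cubic gives [delta (delta^2 + k) = 3 beta / 2 > 0]. *)
Lemma delta_sq_add_k_pos : 0 < delta ^ 2 + k.
Proof. nra. Qed.

Lemma R_AH_pos : 0 < R_AH k delta.
Proof.
  unfold R_AH; apply Rdiv_lt_0_compat; [lra |].
  apply sqrt_lt_R0, delta_sq_add_k_pos.
Qed.

Lemma R_AH_sq : R_AH k delta ^ 2 = / (delta ^ 2 + k).
Proof.
  pose proof delta_sq_add_k_pos.
  assert (0 < sqrt (delta ^ 2 + k)) by (apply sqrt_lt_R0; lra).
  unfold R_AH; rewrite <- (pow2_sqrt (delta ^ 2 + k)) at 2 by lra; field; lra.
Qed.

Lemma profile_at_x_Sigma :
  b xs = (R_AH k delta ^ 2 - Rb ^ 2) / R_AH k delta ^ 2.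
Proof.
  pose proof den_pos; pose proof delta_sq_add_k_pos.
  rewrite R_AH_sq; unfold b, horizon_profile.
  rewrite lambda1_matching, lambda2_eq, x_Sigma_eq.
  replace beta with (2 * (delta ^ 3 + k * delta) / 3) by lra.
  field; lra.
Qed.

Lemma profile_at_x_Sigma_neg : R_AH k delta < Rb -> b xs < 0.
Proof.
  intros Hlt; pose proof R_AH_pos.
  rewrite profile_at_x_Sigma; apply Rmult_neg_pos; [nra |].
  apply Rinv_0_lt_compat, pow_lt; lra.
Qed.

Lemma profile_at_x_Sigma_zero : Rb = R_AH k delta -> b xs = 0.
Proof.
  intros Heq; pose proof R_AH_pos.
  rewrite profile_at_x_Sigma, Heq; field; lra.
Qed.

Lemma profile_at_x_Sigma_pos : Rb < R_AH k delta -> 0 < b xs.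
Proof.
  intros Hlt; pose proof R_AH_pos.
  rewrite profile_at_x_Sigma; apply Rdiv_lt_0_compat; [nra |].
  apply pow_lt; lra.
Qed.

Lemma Bfun_on_ray (x u : R) : 0 < u -> 0 < x -> Bfun k beta delta Rb u (x * u) = b x.
Proof.
  intros Hu Hx; rewrite Bfun_horizon_profile by nra.
  unfold b, L1, L2; f_equal; field; lra.
Qed.

Lemma Bfun_neg_beyond (x0 u r : R) : xs <= x0 -> b x0 <= 0 -> 0 < u -> x0 * u < r ->
  Bfun k beta delta Rb u r < 0.
Proof.
  intros Hx0 Hb0 Hu Hr; pose proof x_Sigma_pos.
  rewrite Bfun_horizon_profile by nra; fold L1 L2.
  assert (Hratio : x0 < r / u) by (apply lt_div_of_mul_lt; lra).
  assert (b (r / u) < b x0).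
  { apply horizon_profile_decreasing with xs;
      [apply lambda2_pos | lra | rewrite lambda1_matching | |]; lra. }
  unfold b in *; lra.
Qed.

Lemma Bfun_pos_below (x0 u r : R) : 0 <= b x0 -> 0 < u -> xs * u < r < x0 * u ->
  0 < Bfun k beta delta Rb u r.
Proof.
  intros Hb0 Hu [Hr0 Hr1]; pose proof x_Sigma_pos.
  rewrite Bfun_horizon_profile by nra; fold L1 L2.
  assert (xs < r / u) by (apply lt_div_of_mul_lt; lra).
  assert (r / u < x0) by (apply div_lt_of_lt_mul; lra).
  assert (b x0 < b (r / u)).
  { apply horizon_profile_decreasing with xs;
      [apply lambda2_pos | lra | rewrite lambda1_matching | |]; lra. }
  unfold b in *; lra.
Qed.

End Exterior.

(* [hk] and [hRb1] only make [sqrt (1 - k Rb^2)] a genuine square root; the argument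
   never needs them. *)
Theorem mainTheorem4 (k beta delta Rb : R)
  (hk : k = -1 \/ k = 0 \/ k = 1)
  (hbeta : 0 < beta)
  (hdelta : 0 < delta)
  (hcubic : delta ^ 3 + k * delta - 3 * beta / 2 = 0)
  (hRb : 0 < Rb)
  (hRb1 : k = 1 -> Rb < 1) :
  (R_AH k delta < Rb ->
     forall u r, 0 < u -> x_Sigma k delta Rb * u < r -> Bfun k beta delta Rb u r < 0)
  /\
  (Rb = R_AH k delta ->
     (forall u, 0 < u -> Bfun k beta delta Rb u (x_Sigma k delta Rb * u) = 0)
     /\ (forall u r, 0 < u -> x_Sigma k delta Rb * u < r -> Bfun k beta delta Rb u r < 0))
  /\
  (Rb < R_AH k delta ->
     exists xAH, x_Sigma k delta Rb < xAH
       /\ (forall u, 0 < u -> Bfun k beta delta Rb u (xAH * u) = 0)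
       /\ (forall u r, 0 < u -> x_Sigma k delta Rb * u < r < xAH * u ->
             0 < Bfun k beta delta Rb u r)
       /\ (forall u r, 0 < u -> xAH * u < r -> Bfun k beta delta Rb u r < 0)).
Proof.
  pose proof (x_Sigma_pos k delta Rb hdelta hRb) as Hxs.
  split; [| split].
  - intros Hlt u r.
    apply (Bfun_neg_beyond k beta delta Rb hbeta hdelta hRb); [lra |].
    left; exact (profile_at_x_Sigma_neg k beta delta Rb hbeta hdelta hcubic hRb Hlt).
  - intros Heq.
    pose proof (profile_at_x_Sigma_zero k beta delta Rb hbeta hdelta hcubic hRb Heq) as Hzero.
    split.
    + intros u Hu; rewrite Bfun_on_ray by assumption; exact Hzero.
    + intros u r; apply (Bfun_neg_beyond k beta delta Rb hbeta hdelta hRb); lra.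
  - intros Hlt.
    destruct (horizon_profile_root_above _ _ _
                (lambda1_nonneg k beta delta Rb hbeta hdelta hRb)
                (lambda2_pos k beta delta Rb hbeta hdelta hRb) Hxs
                (profile_at_x_Sigma_pos k beta delta Rb hbeta hdelta hcubic hRb Hlt))
      as [xAH [HxAH Hroot]].
    exists xAH; repeat split.
    + exact HxAH.
    + intros u Hu; rewrite Bfun_on_ray by lra; exact Hroot.
    + intros u r; apply (Bfun_pos_below k beta delta Rb hbeta hdelta hRb); lra.
    + intros u r; apply (Bfun_neg_beyond k beta delta Rb hbeta hdelta hRb); lra.
Qed.
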